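(* Let $G$ be an additive group and let $(X,\rho)$ be the metric space described below. Then $X$ is an $\mathbb R$-tree.
   Context: A function on an interval $(\alpha,\beta)$ is piecewise constant from the left if for every $x$ there is $\varepsilon>0$ with $f$ constant on $[x-\varepsilon,x]$. $X$ is the set of pairs $(f,a_f)$, $a_f>0$ real, $f:(a_f,+\infty)\to G$ piecewise constant from the left with $f|_{(b_f,+\infty)}\equiv0$ for some $b_f\ge a_f$. Order: $(f,a_f)\preceq(g,a_g)$ iff $a_f\le a_g$ and $f|_{(a_g,+\infty)}=g$; any two elements $p,q$ have a supremum $p\vee q$. Metric: $\rho((f,a_f),(g,a_g))=|a_f-a_g|$ if the pairs are comparable, and $\rho(p,q)=\rho(p,p\vee q)+\rho(p\vee q,q)$ otherwise. An $\mathbb R$-tree is a geodesic metric space in which any two points are joined by a unique segment and $[xy]\subset[xz]\cup[zy]$ for all $x,y,z$. *)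

From Stdlib Require Import Reals Lra ClassicalEpsilon ClassicalDescription.
From mathcomp Require Import ssreflect ssrfun ssrbool eqtype ssralg.
Set Implicit Arguments.
Open Scope R_scope.

Definition geodesic (T : Type) (d : T -> T -> R) (x y : T) (gamma : R -> T) : Prop :=
  gamma 0 = x /\ gamma (d x y) = y /\
  forall s t, 0 <= s <= d x y -> 0 <= t <= d x y ->
    d (gamma s) (gamma t) = Rabs (s - t).

Definition geod_image (T : Type) (d : T -> T -> R) (x y : T) (gamma : R -> T) (p : T) : Prop :=
  exists t, 0 <= t <= d x y /\ gamma t = p.

(* the segment [xy]: points lying on a geodesic from x to y
   (it is the unique segment once uniqueness holds) *)
Definition segment (T : Type) (d : T -> T -> R) (x y : T) (p : T) : Prop :=
  exists gamma, geodesic d x y gamma /\ geod_image d x y gamma p.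

Definition is_metric (T : Type) (d : T -> T -> R) : Prop :=
  (forall x y, d x y = 0 <-> x = y) /\
  (forall x y, d x y = d y x) /\
  (forall x y z, d x z <= d x y + d y z).

Definition is_Rtree (T : Type) (d : T -> T -> R) : Prop :=
  is_metric d /\
  (forall x y, exists gamma, geodesic d x y gamma) /\
  (forall x y g1 g2, geodesic d x y g1 -> geodesic d x y g2 ->
     forall p, geod_image d x y g1 p <-> geod_image d x y g2 p) /\
  (forall x y z p, segment d x y p -> segment d x z p \/ segment d z y p).

Section X.
Variable G : zmodType.

(* f : (a, +oo) -> G is represented by a total function R -> G that is
   normalized to 0 outside of (a, +oo), so that equal pairs are Leibniz equal. *)
Record Xelt : Type := MkX {
  xf : R -> G;
  xa : R;
  xa_pos : 0 < xa;
  xf_out : forall x, x <= xa -> xf x = GRing.zero;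
  xf_pcl : forall x, xa < x -> exists eps, 0 < eps /\ xa < x - eps /\
             forall y, x - eps <= y <= x -> xf y = xf x;
  xf_ev : exists b, xa <= b /\ forall x, b < x -> xf x = GRing.zero
}.

Definition Xle (p q : Xelt) : Prop :=
  xa p <= xa q /\ forall x, xa q < x -> xf p x = xf q x.

Definition is_sup (p q s : Xelt) : Prop :=
  Xle p s /\ Xle q s /\ forall u, Xle p u -> Xle q u -> Xle s u.

Lemma X0_out : forall x, x <= 1 -> (fun _ : R => (GRing.zero : G)) x = GRing.zero.
Proof. by []. Qed.
Lemma X0_pcl : forall x, 1 < x -> exists eps, 0 < eps /\ 1 < x - eps /\
   forall y, x - eps <= y <= x -> (fun _ : R => (GRing.zero : G)) y = (fun _ : R => GRing.zero) x.
Proof. move=> x hx; exists ((x - 1) / 2); split; [lra|split; [lra|by []]]. Qed.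
Lemma X0_ev : exists b, 1 <= b /\ forall x, b < x -> (fun _ : R => (GRing.zero : G)) x = GRing.zero.
Proof. exists 1; split; [lra|by []]. Qed.

Definition X0 : Xelt := @MkX (fun _ => GRing.zero) 1 Rlt_0_1 X0_out X0_pcl X0_ev.

Definition inhX : inhabited Xelt := inhabits X0.

(* the supremum p \/ q (chosen; its existence is a claim of the paper) *)
Definition Xjoin (p q : Xelt) : Xelt := epsilon inhX (is_sup p q).

Definition rho (p q : Xelt) : R :=
  if excluded_middle_informative (Xle p q \/ Xle q p)
  then Rabs (xa p - xa q)
  else Rabs (xa p - xa (Xjoin p q)) + Rabs (xa (Xjoin p q) - xa q).

End X.

From Stdlib Require Import Reals Lra ClassicalEpsilon ClassicalDescription FunctionalExtensionality ProofIrrelevance Classical.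
From mathcomp Require Import ssreflect ssrbool ssralg.
Set Implicit Arguments.
Unset Strict Implicit.
Open Scope R_scope.

(** The order ≼ is a tree order: the elements above a fixed p form a chain on
    which a is an order isomorphism onto [a_p, +oo), obtained by raising the
    threshold of p.  Two elements p, q have a join p ∨ q: raise p to the least
    level above which f_p and f_q agree (it exists because both vanish
    eventually).  Hence rho(p, q) = (a_{p∨q} - a_p) + (a_{p∨q} - a_q), and the
    geodesic from p to q climbs the chain from p to p ∨ q and then descends the
    chain to q.  A point z lies between p and q (rho(p,z) + rho(z,q) = rho(p,q))
    exactly when it lies above p or q and below p ∨ q, which forces geodesics to
    be unique; and a point of [x,y] above x lies, by the chain property, below
    x ∨ z or below z ∨ y, which gives [xy] ⊂ [xz] ∪ [zy]. *)

Definition between {T : Type} (d : T -> T -> R) (x z y : T) : Prop :=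
  d x z + d z y = d x y.

Lemma between_sym (T : Type) (d : T -> T -> R) (x z y : T) :
  (forall u v, d u v = d v u) -> between d x z y -> between d y z x.
Proof. by rewrite /between => dC h; rewrite (dC y z) (dC z x) (dC y x); lra. Qed.

Lemma geodesic_between (T : Type) (d : T -> T -> R) (x y : T) (g : R -> T) (t : R) :
  geodesic d x y g -> 0 <= t <= d x y -> between d x (g t) y /\ d x (g t) = t.
Proof.
move=> [g0 [g1 giso]] ht.
have dx := giso 0 t ltac:(lra) ht; rewrite g0 in dx.
have dy := giso t (d x y) ht ltac:(lra); rewrite g1 in dy.
rewrite /between dx dy (Rabs_left1 (0 - t)) ?(Rabs_left1 (t - d x y)); lra.
Qed.

Section TreeOrder.
Context {G : zmodType}.
Implicit Types p q s u v w z : Xelt G.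

Lemma Xelt_eq p q : xa p = xa q -> (forall x, xf p x = xf q x) -> p = q.
Proof.
case: p q => [f a ha fout fpcl fev] [g b hb gout gpcl gev] /= ab fg.
have fg' : f = g by apply: functional_extensionality.
by subst; f_equal; apply: proof_irrelevance.
Qed.

Lemma Xle_refl p : Xle p p.
Proof. by split; [lra|]. Qed.

Lemma Xle_trans p q u : Xle p q -> Xle q u -> Xle p u.
Proof. by move=> [pq fpq] [qu fqu]; split=> [|x hx]; [lra|rewrite fpq ?fqu //; lra]. Qed.

Lemma xa_Xle p q : Xle p q -> xa p <= xa q.
Proof. by case. Qed.

Lemma Xle_xa_inj p q : Xle p q -> xa p = xa q -> p = q.
Proof.
move=> [_ fpq] ea; apply: Xelt_eq => // x.
case: (Rle_dec x (xa q)) => hx; last by apply: fpq; lra.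
by rewrite !xf_out //; lra.
Qed.

Lemma Xle_antisym p q : Xle p q -> Xle q p -> p = q.
Proof.
move=> pq qp; apply: (Xle_xa_inj pq).
by have := xa_Xle pq; have := xa_Xle qp; lra.
Qed.

Lemma Xle_above_xa w u v : Xle w u -> Xle w v -> xa u <= xa v -> Xle u v.
Proof. by move=> [_ fwu] [_ fwv] uv; split=> // x hx; rewrite -fwu ?fwv //; lra. Qed.

Lemma Xle_above_total w u v : Xle w u -> Xle w v -> Xle u v \/ Xle v u.
Proof.
move=> wu wv; case: (Rle_dec (xa u) (xa v)) => uv.
- by left; apply: Xle_above_xa wu wv uv.
- by right; apply: Xle_above_xa wv wu _; lra.
Qed.

Definition raise_f p c (x : R) : G :=
  match Rlt_dec (Rmax c (xa p)) x with left _ => xf p x | right _ => GRing.zero end.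

Lemma raise_pos p c : 0 < Rmax c (xa p).
Proof. by have := Rmax_r c (xa p); have := xa_pos p; lra. Qed.

Lemma raise_out p c x : x <= Rmax c (xa p) -> raise_f p c x = GRing.zero.
Proof. by rewrite /raise_f; case: Rlt_dec => //; lra. Qed.

Lemma raise_pcl p c x : Rmax c (xa p) < x -> exists eps, 0 < eps /\
  Rmax c (xa p) < x - eps /\ forall y, x - eps <= y <= x -> raise_f p c y = raise_f p c x.
Proof.
move=> hx; have := Rmax_r c (xa p) => hm.
have px : xa p < x by lra.
have [eps [eps0 [heps fconst]]] := xf_pcl p px.
set e := Rmin eps ((x - Rmax c (xa p)) / 2).
have := Rmin_l eps ((x - Rmax c (xa p)) / 2); have := Rmin_r eps ((x - Rmax c (xa p)) / 2).
rewrite -/e => e2 e1.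
exists e; split; [apply: Rmin_pos; lra | split; [lra|]] => y hy.
rewrite /raise_f; case: Rlt_dec => [_|]; last lra.
by case: Rlt_dec => [_|]; [apply: fconst; lra | lra].
Qed.

Lemma raise_ev p c : exists b, Rmax c (xa p) <= b /\ forall x, b < x -> raise_f p c x = GRing.zero.
Proof.
have [b [_ fb]] := xf_ev p.
exists (Rmax b (Rmax c (xa p))); split=> [|x hx]; first exact: Rmax_r.
have := Rmax_l b (Rmax c (xa p)) => hb.
by rewrite /raise_f; case: Rlt_dec => // _; apply: fb; lra.
Qed.

Definition Xraise p c : Xelt G :=
  @MkX G (raise_f p c) _ (raise_pos p c) (@raise_out p c) (@raise_pcl p c) (raise_ev p c).

Lemma xa_Xraise p c : xa (Xraise p c) = Rmax c (xa p).
Proof. by []. Qed.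

Lemma Xle_raise p c : Xle p (Xraise p c).
Proof.
split=> [|x /= hx]; first exact: Rmax_r.
by rewrite /raise_f; case: Rlt_dec.
Qed.

Lemma Xraise_eq p z c : Xle p z -> xa z = c -> Xraise p c = z.
Proof.
move=> pz zc; have := xa_Xle pz => apz.
have a_c : xa (Xraise p c) = c by rewrite xa_Xraise Rmax_left; lra.
apply: Xle_xa_inj; last by rewrite a_c zc.
by apply: (Xle_above_xa (Xle_raise p c) pz); lra.
Qed.

Definition agree_above p q (c : R) : Prop :=
  Rmax (xa p) (xa q) <= c /\ forall x, c < x -> xf p x = xf q x.

Lemma least_agree_level p q :
  exists m, agree_above p q m /\ forall c, agree_above p q c -> m <= c.
Proof.
have [bp [_ fbp]] := xf_ev p; have [bq [_ fbq]] := xf_ev q.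
set c0 := Rmax (Rmax (xa p) (xa q)) (Rmax bp bq).
have agree_c0 : agree_above p q c0.
  split=> [|x hx]; first exact: Rmax_l.
  have := Rmax_r (Rmax (xa p) (xa q)) (Rmax bp bq).
  have := Rmax_l bp bq; have := Rmax_r bp bq; rewrite -/c0 => h1 h2 h3.
  by rewrite fbp ?fbq //; lra.
set lower := fun y => forall c, agree_above p q c -> y <= c.
have [m [m_ub m_lub]] : {m | is_lub lower m}.
  apply: completeness; first by exists c0 => y; apply.
  by exists (Rmax (xa p) (xa q)) => c [].
exists m; split; last by move=> c hc; apply: m_lub => y; apply.
split; first by apply: m_ub => c [].
(* Any x > m fails to be a lower bound, so some agreement level lies below x. *)
move=> x hx; apply: NNPP => fx.
suff : lower x by move/m_ub; lra.
move=> c [_ fc]; case: (Rle_dec x c) => // xc.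
by case: fx; apply: fc; lra.
Qed.

Lemma exists_sup p q : exists s, is_sup p q s.
Proof.
have [m [[pqm fm] m_least]] := least_agree_level p q.
have := Rmax_l (xa p) (xa q); have := Rmax_r (xa p) (xa q) => hq hp.
have am : xa (Xraise p m) = m by rewrite xa_Xraise Rmax_left //; lra.
exists (Xraise p m); split; first exact: Xle_raise.
split.
  split=> [|x hx]; first by rewrite am; lra.
  by rewrite am in hx; rewrite /= /raise_f Rmax_left; [case: Rlt_dec => // _; rewrite fm | lra].
move=> u pu [qu fqu]; apply: (Xle_above_xa (Xle_raise p m) pu).
rewrite am; apply: m_least; split=> [|x hx]; first exact: Rmax_lub (xa_Xle pu) qu.
by case: pu => _ fpu; rewrite fpu ?fqu.
Qed.

Lemma Xjoin_spec p q : is_sup p q (Xjoin p q).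
Proof. exact: epsilon_spec (exists_sup p q). Qed.

Lemma Xjoin_l p q : Xle p (Xjoin p q).
Proof. by case: (Xjoin_spec p q). Qed.

Lemma Xjoin_r p q : Xle q (Xjoin p q).
Proof. by case: (Xjoin_spec p q) => _ []. Qed.

Lemma Xjoin_least p q u : Xle p u -> Xle q u -> Xle (Xjoin p q) u.
Proof. by case: (Xjoin_spec p q) => _ [_]; apply. Qed.

Lemma xa_Xjoin p q : xa p <= xa (Xjoin p q) /\ xa q <= xa (Xjoin p q).
Proof. by split; apply: xa_Xle; [apply: Xjoin_l | apply: Xjoin_r]. Qed.

Lemma Xjoin_unique p q s : is_sup p q s -> Xjoin p q = s.
Proof.
move=> [ps [qs s_least]].
by apply: Xle_antisym; [apply: Xjoin_least | apply: s_least; [apply: Xjoin_l | apply: Xjoin_r]].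
Qed.

Lemma XjoinC p q : Xjoin p q = Xjoin q p.
Proof.
apply: Xjoin_unique; split; [exact: Xjoin_r | split; [exact: Xjoin_l|]].
by move=> u pu qu; apply: Xjoin_least.
Qed.

Lemma Xjoin_of_Xle p q : Xle p q -> Xjoin p q = q.
Proof. by move=> pq; apply: Xjoin_unique; split; [|split; [exact: Xle_refl|]]. Qed.

Lemma Xjoin_squeeze p q u v :
  Xle p u -> Xle q v -> Xle u (Xjoin p q) -> Xle v (Xjoin p q) -> Xjoin u v = Xjoin p q.
Proof.
move=> pu qv uJ vJ; apply: Xle_antisym; first exact: Xjoin_least.
apply: Xjoin_least; [apply: Xle_trans pu _ | apply: Xle_trans qv _].
- exact: Xjoin_l.
- exact: Xjoin_r.
Qed.

Lemma rhoE p q : rho p q = (xa (Xjoin p q) - xa p) + (xa (Xjoin p q) - xa q).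
Proof.
have [hp hq] := xa_Xjoin p q.
rewrite /rho; destruct excluded_middle_informative as [[pq|qp]|npq]; rewrite /=.
- by rewrite Xjoin_of_Xle // Rabs_left1; have := xa_Xle pq; lra.
- by rewrite XjoinC Xjoin_of_Xle // Rabs_right; have := xa_Xle qp; lra.
- by rewrite Rabs_left1 ?Rabs_right; lra.
Qed.

Lemma rho_Xle p q : Xle p q -> rho p q = xa q - xa p.
Proof. by move=> pq; rewrite rhoE Xjoin_of_Xle //; lra. Qed.

Lemma rhoC p q : rho p q = rho q p.
Proof. by rewrite !rhoE XjoinC; lra. Qed.

Lemma rho_ge0 p q : 0 <= rho p q.
Proof. by rewrite rhoE; have [? ?] := xa_Xjoin p q; lra. Qed.

Lemma rho_above w u v : Xle w u -> Xle w v -> rho u v = Rabs (xa u - xa v).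
Proof.
move=> wu wv; case: (Xle_above_total wu wv) => [uv|vu].
- by rewrite rho_Xle // Rabs_left1; have := xa_Xle uv; lra.
- by rewrite rhoC rho_Xle // Rabs_right; have := xa_Xle vu; lra.
Qed.

Lemma rho_eq0 p q : rho p q = 0 <-> p = q.
Proof.
split=> [|<-]; last by rewrite (rho_Xle (Xle_refl p)); lra.
rewrite rhoE => h.
have [hp hq] := xa_Xjoin p q.
have Jp : p = Xjoin p q by apply: Xle_xa_inj (Xjoin_l p q) _; lra.
have Jq : q = Xjoin p q by apply: Xle_xa_inj (Xjoin_r p q) _; lra.
by rewrite Jp -Jq.
Qed.

(* The joins p ∨ q and q ∨ z lie on the chain above q; the larger one dominates p ∨ z. *)
Lemma rho_triangle p q z : rho p z <= rho p q + rho q z.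
Proof.
rewrite !rhoE.
have [? ?] := xa_Xjoin p z.
have [? ?] := xa_Xjoin p q.
have [? ?] := xa_Xjoin q z.
case: (Xle_above_total (Xjoin_r p q) (Xjoin_l q z)) => J.
- have : Xle (Xjoin p z) (Xjoin q z).
    by apply: Xjoin_least; [apply: Xle_trans (Xjoin_l p q) J | apply: Xjoin_r].
  by move/xa_Xle => ?; have := xa_Xle J; lra.
- have : Xle (Xjoin p z) (Xjoin p q).
    by apply: Xjoin_least; [apply: Xjoin_l | apply: Xle_trans (Xjoin_r q z) J].
  by move/xa_Xle => ?; have := xa_Xle J; lra.
Qed.

Lemma rho_metric : is_metric (@rho G).
Proof. by split; [exact: rho_eq0 | split; [exact: rhoC | move=> x y z; exact: rho_triangle]]. Qed.

Definition Xgeod p q (t : R) : Xelt G :=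
  match Rle_dec t (xa (Xjoin p q) - xa p) with
  | left _ => Xraise p (xa p + t)
  | right _ => Xraise q (xa q + rho p q - t)
  end.

Lemma Xgeod_up p q t : 0 <= t <= xa (Xjoin p q) - xa p ->
  [/\ Xle p (Xgeod p q t), Xle (Xgeod p q t) (Xjoin p q) & xa (Xgeod p q t) = xa p + t].
Proof.
move=> ht; rewrite /Xgeod; case: Rle_dec => h; last lra.
have a_t : xa (Xraise p (xa p + t)) = xa p + t by rewrite xa_Xraise Rmax_left; lra.
split=> //; first exact: Xle_raise.
by apply: Xle_above_xa (Xle_raise p _) (Xjoin_l p q) _; lra.
Qed.

Lemma Xgeod_down p q t : xa (Xjoin p q) - xa p < t <= rho p q ->
  [/\ Xle q (Xgeod p q t), Xle (Xgeod p q t) (Xjoin p q) & xa (Xgeod p q t) = xa q + rho p q - t].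
Proof.
move=> ht; have := rhoE p q => hrho.
rewrite /Xgeod; case: Rle_dec => h; first lra.
have a_t : xa (Xraise q (xa q + rho p q - t)) = xa q + rho p q - t.
  by rewrite xa_Xraise Rmax_left; lra.
split=> //; first exact: Xle_raise.
by apply: Xle_above_xa (Xle_raise q _) (Xjoin_r p q) _; lra.
Qed.

Lemma Xgeod_geodesic p q : geodesic (@rho G) p q (Xgeod p q).
Proof.
have := rhoE p q => hrho.
have [hp hq] := xa_Xjoin p q.
split; [|split].
- rewrite /Xgeod; case: Rle_dec => h; last lra.
  by apply: Xraise_eq (Xle_refl p) _; lra.
- rewrite /Xgeod; case: Rle_dec => h; last by apply: Xraise_eq; [apply: Xle_refl | lra].
  have Jq : q = Xjoin p q by apply: Xle_xa_inj (Xjoin_r p q) _; lra.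
  by apply: Xraise_eq; [rewrite Jq; apply: Xjoin_l | lra].
- move=> s t hs ht.
  case: (Rle_dec s (xa (Xjoin p q) - xa p)) => hs';
  case: (Rle_dec t (xa (Xjoin p q) - xa p)) => ht'.
  + have [ps _ as_] := @Xgeod_up p q s ltac:(lra).
    have [pt _ at_] := @Xgeod_up p q t ltac:(lra).
    by rewrite (rho_above ps pt) as_ at_; f_equal; lra.
  + have [ps sJ as_] := @Xgeod_up p q s ltac:(lra).
    have [qt tJ at_] := @Xgeod_down p q t ltac:(lra).
    by rewrite rhoE (Xjoin_squeeze ps qt sJ tJ) as_ at_ Rabs_left1; lra.
  + have [qs sJ as_] := @Xgeod_down p q s ltac:(lra).
    have [pt tJ at_] := @Xgeod_up p q t ltac:(lra).
    by rewrite rhoC rhoE (Xjoin_squeeze pt qs tJ sJ) as_ at_ Rabs_right; lra.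
  + have [qs _ as_] := @Xgeod_down p q s ltac:(lra).
    have [qt _ at_] := @Xgeod_down p q t ltac:(lra).
    by rewrite (rho_above qs qt) as_ at_ /Rabs; do 2!case: Rcase_abs; lra.
Qed.

Lemma betweenP p z q :
  between (@rho G) p z q <-> (Xle p z \/ Xle q z) /\ Xle z (Xjoin p q).
Proof.
split=> [|[[pz|qz] zJ]]; rewrite /between.
- rewrite !rhoE => hb.
  have [? ?] := xa_Xjoin p z.
  have [? ?] := xa_Xjoin z q.
  case: (Xle_above_total (Xjoin_r p z) (Xjoin_l z q)) => J; have := xa_Xle J => ?.
  + have Jle : Xle (Xjoin p q) (Xjoin z q).
      by apply: Xjoin_least; [apply: Xle_trans (Xjoin_l p z) J | apply: Xjoin_r].
    have := xa_Xle Jle => ?.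
    have -> : Xjoin p q = Xjoin z q by apply: (Xle_xa_inj Jle); lra.
    have ez : z = Xjoin p z by apply: Xle_xa_inj (Xjoin_r p z) _; lra.
    by split; [left; rewrite ez; apply: Xjoin_l | apply: Xjoin_l].
  + have Jle : Xle (Xjoin p q) (Xjoin p z).
      by apply: Xjoin_least; [apply: Xjoin_l | apply: Xle_trans (Xjoin_r z q) J].
    have := xa_Xle Jle => ?.
    have -> : Xjoin p q = Xjoin p z by apply: (Xle_xa_inj Jle); lra.
    have ez : z = Xjoin z q by apply: Xle_xa_inj (Xjoin_l z q) _; lra.
    by split; [right; rewrite ez; apply: Xjoin_r | apply: Xjoin_r].
- rewrite (rho_Xle pz) (rhoE z q) (rhoE p q).
  by rewrite (Xjoin_squeeze pz (Xle_refl q) zJ (Xjoin_r p q)); lra.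
- rewrite (rhoC z q) (rho_Xle qz) (rhoE p z) (rhoE p q).
  by rewrite (Xjoin_squeeze (Xle_refl p) qz (Xjoin_l p q) zJ); lra.
Qed.

Lemma Xgeod_between p z q : between (@rho G) p z q -> Xgeod p q (rho p z) = z.
Proof.
move=> hb; have /betweenP [pqz zJ] := hb.
have := xa_Xle zJ; have := xa_Xle (Xjoin_r p q) => ? ?.
case: pqz => [pz|qz].
- rewrite (rho_Xle pz) /Xgeod; case: Rle_dec => h; last lra.
  by apply: (Xraise_eq pz); lra.
- have := rhoE p q; have := xa_Xle qz => ? ?.
  have tz : rho p z = rho p q - (xa z - xa q).
    by move: hb; rewrite /between (rhoC z q) (rho_Xle qz); lra.
  rewrite tz /Xgeod; case: Rle_dec => h; last by apply: (Xraise_eq qz); lra.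
  have ez : z = Xjoin p q by apply: (Xle_xa_inj zJ); lra.
  by apply: Xraise_eq; [rewrite ez; apply: Xjoin_l | lra].
Qed.

Lemma geodesic_Xgeod p q g t :
  geodesic (@rho G) p q g -> 0 <= t <= rho p q -> g t = Xgeod p q t.
Proof.
move=> hg ht; have [hb dt] := geodesic_between hg ht.
by rewrite -{2}dt Xgeod_between.
Qed.

Lemma segment_of_between p z q : between (@rho G) p z q -> segment (@rho G) p q z.
Proof.
move=> hb; exists (Xgeod p q); split; first exact: Xgeod_geodesic.
exists (rho p z); split; last exact: Xgeod_between.
by move: hb; rewrite /between; have := rho_ge0 p z; have := rho_ge0 z q; lra.
Qed.

Lemma between_branch (x y z p : Xelt G) :
  Xle x p -> Xle p (Xjoin x y) -> between (@rho G) x p z \/ between (@rho G) z p y.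
Proof.
move=> xp pJ.
case: (classic (Xle p (Xjoin x z))) => [pxz|npxz].
  by left; apply/betweenP; split; [left|].
have zp : Xle z p.
  apply: Xle_trans (Xjoin_r x z) _.
  by case: (Xle_above_total (Xjoin_l x z) xp) => [//|/npxz []].
case: (classic (Xle p (Xjoin z y))) => [pzy|npzy].
  by right; apply/betweenP; split; [left|].
exfalso; case: (Xle_above_total (Xjoin_r x z) (Xjoin_l z y)) => J.
- apply: npzy; apply: Xle_trans pJ _; apply: Xjoin_least; last exact: Xjoin_r.
  exact: Xle_trans (Xjoin_l x z) J.
- apply: npxz; apply: Xle_trans pJ _; apply: Xjoin_least; first exact: Xjoin_l.
  exact: Xle_trans (Xjoin_r z y) J.
Qed.

Lemma between_split (x y z p : Xelt G) :
  between (@rho G) x p y -> between (@rho G) x p z \/ between (@rho G) z p y.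
Proof.
move=> /betweenP [[xp|yp] pJ]; first exact: between_branch.
rewrite XjoinC in pJ.
by case: (between_branch z yp pJ) => /(between_sym rhoC) h; [right|left].
Qed.

End TreeOrder.

Theorem corollary1 (G : zmodType) : is_Rtree (@rho G).
Proof.
split; [exact: rho_metric | split; [|split]].
- by move=> x y; exists (Xgeod x y); apply: Xgeod_geodesic.
- move=> x y g1 g2 h1 h2 p.
  by split=> -[t [ht <-]]; exists t; rewrite (geodesic_Xgeod h1 ht) (geodesic_Xgeod h2 ht).
- move=> x y z p [g [hg [t [ht <-]]]].
  have [hb _] := geodesic_between hg ht.
  by case: (between_split z hb) => h; [left|right]; apply: segment_of_between.
Qed.
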